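(* Let $\lambda>0$, $b\ge 0$, and let $(s_n)_{n\ge 1}$, $(a_n)_{n\ge 1}$ be real sequences with $s_n\in[0,1)$ for all $n$, $s\doteq\sup_{n}s_n<1$ and $A\doteq\sup_{n}a_n<\infty$. Consider the difference equation $$x_{n+1}=s_nx_n+x_{n-1}^{\lambda}e^{a_n-bx_n-x_{n-1}},\qquad n\ge 1,$$ with non-negative initial values $x_0,x_1$. (a) Every non-negative solution is eventually uniformly bounded: there is a constant $M$ depending only on $\lambda,A,s$ (e.g. $M=1+\lambda^{\lambda}e^{A-\lambda}/(1-s)$) such that for every non-negative solution $\{x_n\}$ one has $x_n\le M$ for all sufficiently large $n$. (b) Let $\lambda>1$ and $\rho=\exp\!\left(-\dfrac{A-\ln(1-s)}{\lambda-1}\right)$. If $\{x_n\}$ is a solution with $0\le x_0,x_1<\rho$, then $\lim_{n\to\infty}x_n=0$. (c) Let $\lambda>1$. If $A<\ln(1-s)+(\lambda-1)[1-\ln(\lambda-1)]$, then every non-negative solution converges to $0$.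
   Context: Solutions are real sequences $\{x_n\}_{n\ge0}$ generated by the recursion from the initial values $x_0,x_1$. *)

From Stdlib Require Import Reals.
Open Scope R_scope.

(* Real power x^y for x >= 0, with the convention 0^y = 0 (y > 0). *)
Definition rpow (x y : R) : R := if Rle_dec x 0 then 0 else Rpower x y.

Definition is_solution (sn an : nat -> R) (lam b : R) (x : nat -> R) : Prop :=
  forall n : nat, (1 <= n)%nat ->
    x (S n) = sn n * x n + rpow (x (n - 1)%nat) lam
                             * exp (an n - b * x n - x (n - 1)%nat).

Definition coeff_hyp (sn an : nat -> R) (s A : R) : Prop :=
  (forall n : nat, (1 <= n)%nat -> 0 <= sn n < 1) /\
  is_lub (fun y => exists n : nat, (1 <= n)%nat /\ y = sn n) s /\
  is_lub (fun y => exists n : nat, (1 <= n)%nat /\ y = an n) A.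

From Stdlib Require Import Reals Lra Lia.
Open Scope R_scope.

(* With f(y) = y^lam e^{-y}, the recurrence gives x_{n+1} <= s x_n + e^A f(x_{n-1}).
   (a) f attains its maximum lam^lam e^{-lam} at y = lam, so x_{n+1} <= s x_n + K and
   the solution eventually falls below 1 + K/(1-s).
   (b), (c) If e^A f(y) <= c y along the orbit with s + c < 1, then
   x_{n+1} <= (s + c) max(x_n, x_{n-1}) and the solution decays geometrically.
   Since f(y) = y y^{lam-1} e^{-y}, one can take c = e^A m^{lam-1} in (b), where
   m = max(x_0, x_1) < rho bounds the whole orbit, and c = e^A (lam-1)^{lam-1} e^{1-lam}
   in (c); the hypotheses on rho and on A say exactly that c < 1 - s. *)

Lemma exp_le_compat a b : a <= b -> exp a <= exp b.
Proof. intros [Hlt | ->]; [left; exact (exp_increasing _ _ Hlt) | lra]. Qed.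

Lemma exp_lt_of_ln_lt a y : 0 < y -> a < ln y -> exp a < y.
Proof. intros Hy Ha; rewrite <- (exp_ln y) by exact Hy; exact (exp_increasing _ _ Ha). Qed.

Lemma mul_ln_sub_le mu y : 0 < mu -> 0 < y -> mu * ln y - y <= mu * ln mu - mu.
Proof.
  intros Hmu Hy.
  pose proof (exp_ineq1_le (ln y - ln mu)) as Hlog.
  unfold Rminus in Hlog; rewrite exp_plus, exp_Ropp, !exp_ln in Hlog by lra.
  apply (Rmult_le_compat_l mu) in Hlog; [|lra].
  replace (mu * (y * / mu)) with y in Hlog by (field; lra).
  lra.
Qed.

Lemma rpow_ge0 y p : 0 <= rpow y p.
Proof. unfold rpow; destruct (Rle_dec y 0); [lra | left; apply exp_pos]. Qed.

Lemma rpow_le_compat p y z : 0 <= p -> 0 <= y <= z -> rpow y p <= rpow z p.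
Proof.
  intros Hp Hyz; unfold rpow.
  destruct (Rle_dec y 0), (Rle_dec z 0); try lra.
  - left; apply exp_pos.
  - apply Rle_Rpower_l; lra.
Qed.

Lemma rpow_eq_mul_pred y p : 0 <= y -> rpow y p = y * rpow y (p - 1).
Proof.
  intros Hy; unfold rpow; destruct (Rle_dec y 0); [lra|].
  replace p with (1 + (p - 1)) at 1 by ring.
  rewrite Rpower_plus, Rpower_1; lra.
Qed.

Lemma rpow_mul_exp_opp_le mu y : 0 < mu -> 0 <= y ->
  rpow y mu * exp (- y) <= exp (mu * ln mu - mu).
Proof.
  intros Hmu Hy; unfold rpow; destruct (Rle_dec y 0).
  - rewrite Rmult_0_l; left; apply exp_pos.
  - unfold Rpower; rewrite <- exp_plus; apply exp_le_compat.
    pose proof (mul_ln_sub_le mu y Hmu ltac:(lra)); lra.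
Qed.

Lemma pow_mul_eventually_lt r C eps : 0 <= r < 1 -> 0 <= C -> 0 < eps ->
  exists N, forall n, (N <= n)%nat -> r ^ n * C < eps.
Proof.
  intros Hr HC Heps.
  destruct (pow_lt_1_zero r ltac:(rewrite Rabs_pos_eq; lra) (eps / (C + 1))
              ltac:(apply Rdiv_lt_0_compat; lra)) as [N HN].
  exists N; intros n Hn.
  pose proof (HN n Hn) as Hrn; rewrite Rabs_pos_eq in Hrn by (apply pow_le; lra).
  assert (Hrn_ge0 : 0 <= r ^ n) by (apply pow_le; lra).
  apply (Rmult_lt_compat_r (C + 1)) in Hrn; [|lra].
  replace (eps / (C + 1) * (C + 1)) with eps in Hrn by (field; lra).
  nra.
Qed.

Lemma eventually_le_of_affine_step (u : nat -> R) r K : 0 <= r < 1 -> 0 <= K ->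
  (forall n, 0 <= u n) -> (forall n, (1 <= n)%nat -> u (S n) <= r * u n + K) ->
  exists N, forall n, (N <= n)%nat -> u n <= 1 + K / (1 - r).
Proof.
  intros Hr HK Hu Hstep.
  assert (HK' : K / (1 - r) = r * (K / (1 - r)) + K) by (field; lra).
  assert (Hgeom : forall m, u (S m) <= K / (1 - r) + r ^ m * u 1%nat).
  { induction m as [|m IH].
    - assert (0 <= K / (1 - r)) by (apply Rmult_le_pos; [lra | left; apply Rinv_0_lt_compat; lra]).
      simpl; lra.
    - apply (Rle_trans _ _ _ (Hstep (S m) ltac:(lia))).
      rewrite HK'; simpl; pose proof (Hu (S m)); nra. }
  destruct (pow_mul_eventually_lt r (u 1%nat) 1 Hr (Hu 1%nat) Rlt_0_1) as [N HN].
  exists (S N); intros [|m] Hm; [lia|].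
  pose proof (Hgeom m); pose proof (HN m ltac:(lia)); lra.
Qed.

Lemma cv0_of_two_step_contraction (u : nat -> R) r : 0 <= r < 1 -> (forall n, 0 <= u n) ->
  (forall n, (1 <= n)%nat -> u (S n) <= r * Rmax (u n) (u (n - 1)%nat)) -> Un_cv u 0.
Proof.
  intros Hr Hu Hstep.
  set (M := Rmax (u 0%nat) (u 1%nat)).
  assert (HM : 0 <= M) by (apply (Rle_trans _ _ _ (Hu 0%nat)), Rmax_l).
  assert (Hpair : forall k, u (2 * k)%nat <= r ^ k * M /\ u (2 * k + 1)%nat <= r ^ k * M).
  { induction k as [|k [IHe IHo]].
    - simpl; rewrite !Rmult_1_l; split; [apply Rmax_l | apply Rmax_r].
    - assert (Hrk : 0 <= r ^ k) by (apply pow_le; lra).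
      assert (Heven : u (2 * S k)%nat <= r ^ S k * M).
      { replace (2 * S k)%nat with (S (2 * k + 1)) by lia.
        apply (Rle_trans _ _ _ (Hstep (2 * k + 1)%nat ltac:(lia))).
        replace (2 * k + 1 - 1)%nat with (2 * k)%nat by lia.
        simpl; rewrite Rmult_assoc; apply Rmult_le_compat_l; [lra|].
        apply Rmax_lub; assumption. }
      split; [exact Heven|].
      replace (2 * S k + 1)%nat with (S (2 * S k)) by lia.
      apply (Rle_trans _ _ _ (Hstep (2 * S k)%nat ltac:(lia))).
      replace (2 * S k - 1)%nat with (2 * k + 1)%nat by lia.
      simpl; rewrite Rmult_assoc; apply Rmult_le_compat_l; [lra|].
      apply Rmax_lub; [|assumption].
      assert (r * (r ^ k * M) <= 1 * (r ^ k * M))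
        by (apply Rmult_le_compat_r; [apply Rmult_le_pos |]; lra).
      simpl in Heven; lra. }
  intros eps Heps.
  destruct (pow_mul_eventually_lt r M eps Hr HM Heps) as [N HN].
  exists (2 * N)%nat; intros n Hn.
  unfold Rdist; rewrite Rminus_0_r, Rabs_pos_eq by apply Hu.
  destruct (Nat.Even_or_Odd n) as [[k ->] | [k ->]];
    [pose proof (proj1 (Hpair k))| pose proof (proj2 (Hpair k))];
    pose proof (HN k ltac:(lia)); lra.
Qed.

Lemma coeff_hyp_bounds sn an s A : coeff_hyp sn an s A ->
  0 <= s /\ forall n, (1 <= n)%nat -> 0 <= sn n <= s /\ an n <= A.
Proof.
  intros [Hsn [[Hs_ub _] [HA_ub _]]].
  assert (Hle : forall n, (1 <= n)%nat -> sn n <= s /\ an n <= A).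
  { intros n Hn; split; [apply Hs_ub | apply HA_ub]; exists n; auto. }
  split.
  - pose proof (Hsn 1%nat (le_n 1)); pose proof (Hle 1%nat (le_n 1)); lra.
  - intros n Hn; pose proof (Hsn n Hn); pose proof (Hle n Hn); lra.
Qed.

Section Solution.

Variables (sn an : nat -> R) (s A lam b : R) (x : nat -> R).
Hypotheses (Hs : s < 1) (Hb : 0 <= b) (Hcoeff : coeff_hyp sn an s A)
  (Hsol : is_solution sn an lam b x) (Hx0 : 0 <= x 0%nat) (Hx1 : 0 <= x 1%nat).

Lemma solution_ge0 n : 0 <= x n.
Proof.
  destruct (coeff_hyp_bounds _ _ _ _ Hcoeff) as [_ Hbounds].
  enough (Hpair : forall k, 0 <= x k /\ 0 <= x (S k)) by apply Hpair.
  induction k as [|k [IH IHS]]; [auto|].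
  split; [exact IHS|].
  rewrite Hsol by lia; replace (S k - 1)%nat with k by lia.
  pose proof (proj1 (Hbounds (S k) ltac:(lia))).
  pose proof (rpow_ge0 (x k) lam); pose proof (exp_pos (an (S k) - b * x (S k) - x k)).
  apply Rplus_le_le_0_compat; apply Rmult_le_pos; lra.
Qed.

Lemma solution_step_le n : (1 <= n)%nat ->
  x (S n) <= s * x n + exp A * (rpow (x (n - 1)%nat) lam * exp (- x (n - 1)%nat)).
Proof.
  intros Hn.
  destruct (coeff_hyp_bounds _ _ _ _ Hcoeff) as [_ Hbounds].
  destruct (Hbounds n Hn) as [Hsn Han].
  rewrite Hsol by exact Hn.
  apply Rplus_le_compat.
  - apply Rmult_le_compat_r; [apply solution_ge0 | lra].
  - rewrite (Rmult_comm (exp A)), Rmult_assoc.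
    apply Rmult_le_compat_l; [apply rpow_ge0|].
    rewrite <- exp_plus; apply exp_le_compat.
    pose proof (Rmult_le_pos _ _ Hb (solution_ge0 n)); lra.
Qed.

Lemma solution_cv0_of_linear_bound c : 0 <= c -> s + c < 1 ->
  (forall n, (1 <= n)%nat ->
     exp A * (rpow (x (n - 1)%nat) lam * exp (- x (n - 1)%nat)) <= c * x (n - 1)%nat) ->
  Un_cv x 0.
Proof.
  intros Hc Hsc Hlin.
  pose proof (proj1 (coeff_hyp_bounds _ _ _ _ Hcoeff)) as Hs0.
  apply (cv0_of_two_step_contraction x (s + c)); [lra | exact solution_ge0|].
  intros n Hn.
  pose proof (solution_step_le n Hn); pose proof (Hlin n Hn).
  pose proof (Rmax_l (x n) (x (n - 1)%nat)); pose proof (Rmax_r (x n) (x (n - 1)%nat)).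
  nra.
Qed.

Lemma solution_eventually_bounded : 0 < lam ->
  exists N, forall n, (N <= n)%nat ->
    x n <= 1 + exp A * exp (lam * ln lam - lam) / (1 - s).
Proof.
  intros Hlam.
  pose proof (proj1 (coeff_hyp_bounds _ _ _ _ Hcoeff)) as Hs0.
  apply eventually_le_of_affine_step; [lra | | exact solution_ge0 |].
  - left; apply Rmult_lt_0_compat; apply exp_pos.
  - intros n Hn; apply (Rle_trans _ _ _ (solution_step_le n Hn)).
    apply Rplus_le_compat_l, Rmult_le_compat_l; [left; apply exp_pos|].
    exact (rpow_mul_exp_opp_le lam _ Hlam (solution_ge0 _)).
Qed.

Lemma solution_cv0_of_small_init : 1 < lam ->
  x 0%nat < exp (- ((A - ln (1 - s)) / (lam - 1))) ->
  x 1%nat < exp (- ((A - ln (1 - s)) / (lam - 1))) ->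
  Un_cv x 0.
Proof.
  intros Hlam Hlt0 Hlt1.
  set (rho := exp (- ((A - ln (1 - s)) / (lam - 1)))) in *.
  set (m := Rmax (x 0%nat) (x 1%nat)).
  assert (Hm : 0 <= m < rho) by (unfold m; apply Rmax_case; lra).
  set (c := exp A * rpow m (lam - 1)).
  assert (Hc : 0 <= c) by (apply Rmult_le_pos; [left; apply exp_pos | apply rpow_ge0]).
  assert (Hcs : c < 1 - s).
  { unfold c, rpow; destruct (Rle_dec m 0); [rewrite Rmult_0_r; lra|].
    unfold Rpower; rewrite <- exp_plus; apply exp_lt_of_ln_lt; [lra|].
    assert (Hln : ln m < ln rho) by (apply ln_increasing; lra).
    unfold rho in Hln; rewrite ln_exp in Hln.
    apply (Rmult_lt_compat_l (lam - 1)) in Hln; [|lra].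
    replace ((lam - 1) * - ((A - ln (1 - s)) / (lam - 1))) with (ln (1 - s) - A)
      in Hln by (field; lra).
    lra. }
  assert (Hlin : forall y, 0 <= y <= m ->
      exp A * (rpow y lam * exp (- y)) <= c * y).
  { intros y Hy; rewrite rpow_eq_mul_pred by lra.
    pose proof (rpow_le_compat (lam - 1) y m ltac:(lra) Hy).
    assert (exp (- y) <= 1) by (rewrite <- exp_0; apply exp_le_compat; lra).
    pose proof (rpow_ge0 y (lam - 1)); pose proof (exp_pos (- y)); pose proof (exp_pos A).
    unfold c.
    assert (y * rpow y (lam - 1) * exp (- y) <= y * rpow m (lam - 1)).
    { apply (Rle_trans _ (y * rpow y (lam - 1) * 1)).
      - apply Rmult_le_compat_l; [apply Rmult_le_pos|]; lra.
      - rewrite Rmult_1_r; apply Rmult_le_compat_l; lra. }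
    nra. }
  assert (Hbelow : forall n, x n <= m /\ x (S n) <= m).
  { induction n as [|n [IH IHS]]; [split; [apply Rmax_l | apply Rmax_r]|].
    split; [exact IHS|].
    apply (Rle_trans _ _ _ (solution_step_le (S n) ltac:(lia))).
    replace (S n - 1)%nat with n by lia.
    pose proof (Hlin (x n) (conj (solution_ge0 n) IH)).
    pose proof (solution_ge0 n); pose proof (proj1 (coeff_hyp_bounds _ _ _ _ Hcoeff)).
    nra. }
  apply (solution_cv0_of_linear_bound c); [exact Hc | lra|].
  intros n _; apply Hlin; split; [apply solution_ge0 | apply Hbelow].
Qed.

Lemma solution_cv0_of_small_sup : 1 < lam ->
  A < ln (1 - s) + (lam - 1) * (1 - ln (lam - 1)) -> Un_cv x 0.
Proof.
  intros Hlam HA.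
  set (c := exp A * exp ((lam - 1) * ln (lam - 1) - (lam - 1))).
  assert (Hc : 0 <= c) by (left; apply Rmult_lt_0_compat; apply exp_pos).
  assert (Hcs : c < 1 - s).
  { unfold c; rewrite <- exp_plus; apply exp_lt_of_ln_lt; [lra | nra]. }
  apply (solution_cv0_of_linear_bound c); [exact Hc | lra|].
  intros n _; set (y := x (n - 1)%nat).
  assert (Hy : 0 <= y) by (apply solution_ge0).
  rewrite rpow_eq_mul_pred by exact Hy.
  pose proof (rpow_mul_exp_opp_le (lam - 1) y ltac:(lra) Hy) as Hmax.
  apply (Rmult_le_compat_l (exp A * y)) in Hmax;
    [|apply Rmult_le_pos; [left; apply exp_pos | exact Hy]].
  unfold c; lra.
Qed.

End Solution.

Theorem mainTheorem1 (lam s A : R) (hlam : 0 < lam) (hs : s < 1) :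
  (* (a) M depends only on lam, A, s *)
  (exists M : R, forall (b : R) (sn an : nat -> R) (x : nat -> R),
      0 <= b -> coeff_hyp sn an s A -> is_solution sn an lam b x ->
      0 <= x 0%nat -> 0 <= x 1%nat ->
      exists N : nat, forall n : nat, (N <= n)%nat -> x n <= M) /\
  (* (b) *)
  (1 < lam ->
    forall (b : R) (sn an : nat -> R) (x : nat -> R),
      0 <= b -> coeff_hyp sn an s A -> is_solution sn an lam b x ->
      let rho := exp (- ((A - ln (1 - s)) / (lam - 1))) in
      0 <= x 0%nat < rho -> 0 <= x 1%nat < rho ->
      Un_cv x 0) /\
  (* (c) *)
  (1 < lam -> A < ln (1 - s) + (lam - 1) * (1 - ln (lam - 1)) ->
    forall (b : R) (sn an : nat -> R) (x : nat -> R),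
      0 <= b -> coeff_hyp sn an s A -> is_solution sn an lam b x ->
      0 <= x 0%nat -> 0 <= x 1%nat ->
      Un_cv x 0).
Proof.
  split; [|split].
  - exists (1 + exp A * exp (lam * ln lam - lam) / (1 - s)).
    intros b sn an x Hb Hcoeff Hsol Hx0 Hx1.
    exact (solution_eventually_bounded sn an s A lam b x hs Hb Hcoeff Hsol Hx0 Hx1 hlam).
  - intros Hlam b sn an x Hb Hcoeff Hsol rho Hx0 Hx1.
    exact (solution_cv0_of_small_init sn an s A lam b x hs Hb Hcoeff Hsol
             (proj1 Hx0) (proj1 Hx1) Hlam (proj2 Hx0) (proj2 Hx1)).
  - intros Hlam HA b sn an x Hb Hcoeff Hsol Hx0 Hx1.
    exact (solution_cv0_of_small_sup sn an s A lam b x hs Hb Hcoeff Hsol Hx0 Hx1 Hlam HA).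
Qed.
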